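(* For every distributed theory $\mathcal T$ and every universally consistent distributed belief pair $\mathcal B$, $\tau_{\mathit{beliefpair}}(D^*_{\mathcal T}(\mathcal B))=D^*_{\tau_{\mathit{theory}}(\mathcal T)}(\tau_{\mathit{beliefpair}}(\mathcal B))$.
   Context: Standing setup (dAEL). $\Sigma=\Sigma_o\uplus\Sigma_s$ is a first-order vocabulary (objective and subjective symbols). A nonempty domain $D$ and a $\Sigma_o$-structure $I_o$ with domain $D$ are fixed, as is a set of agents $\mathcal{A}\subseteq D$. For each $A\in\mathcal{A}$ there is a constant $A\in\Sigma_o$ with $A^{I_o}=A$, and $\Sigma_o$ contains a unary predicate $\mathrm{Apred}$ with $\mathrm{Apred}^{I_o}=\mathcal{A}$. ''Structure'' means a $\Sigma$-structure with domain $D$ that agrees with $I_o$ on $\Sigma_o$. Formulas of dAEL are built from atoms $P(\bar t)$ ($P\in\Sigma$ or equality) using $\wedge,\neg,\forall x$, and the modal rule: if $\varphi$ is a formula and $t$ a term then $K_t\varphi$ is a formula. Truth values are $\mathbf t,\mathbf f,\mathbf u$ with truth order $\mathbf f<_t\mathbf u<_t\mathbf t$; $\mathbf t^{-1}=\mathbf f$, $\mathbf f^{-1}=\mathbf t$, $\mathbf u^{-1}=\mathbf u$. A possible world structure (PWS) is a set of structures. A distributed possible world structure (DPWS) is a family $\mathcal Q=(\mathcal Q_A)_{A\in\mathcal A}$ of PWSs. A distributed belief pair (DBP) is a pair $\mathcal B=(\mathcal B^c,\mathcal B^l)$ of DPWSs, consistent if $\mathcal B^l_A\subseteq\mathcal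 B^c_A$ for all $A$ (DBPs are tacitly consistent). A DPWS $\mathcal Q$ is universally consistent if $\mathcal Q_A\ne\emptyset$ for all $A$; a DBP $\mathcal B$ is universally consistent if $\mathcal B^l$ is. Three-valued value $\varphi^{\mathcal B,I,a}$: atoms get their two-valued value in $I$; $\neg$ by ${}^{-1}$, $\wedge$ and $\forall$ by $\le_t$-glb (Kleene); $(K_t\varphi)^{\mathcal B,I,a}$ is $\mathbf t$ if $t^{I,a}\in\mathcal A$ and $\varphi^{\mathcal B,J,a}=\mathbf t$ for all $J\in\mathcal B^c_{t^{I,a}}$; $\mathbf f$ if $t^{I,a}\notin\mathcal A$ or $\varphi^{\mathcal B,J,a}=\mathbf f$ for some $J\in\mathcal B^l_{t^{I,a}}$; $\mathbf u$ otherwise; for sentences the assignment is omitted and the value of a set of sentences is the $\le_t$-glb of the members' values. A distributed theory is a family $\mathcal T=(\mathcal T_A)_{A\in\mathcal A}$ of sets of dAEL sentences; $D^*_{\mathcal T}(\mathcal B)=(D^c_{\mathcal T}(\mathcal B),D^l_{\mathcal T}(\mathcal B))$ with $D^c_{\mathcal T}(\mathcal B)_A=\{I:\mathcal T_A^{\mathcal B,I}\ne\mathbf f\}$ and $D^l_{\mathcal T}(\mathcal B)_A=\{I:\mathcal T_A^{\mathcal B,I}=\mathbf t\}$. Translation to AEL. $\Sigma'$ consists of all symbols of $\Sigma_o$ and all symbols of $\Sigma_s$ with arity increased by one. A fixed element $\delta\in D$ is chosen. A $\Sigma'$-structure always has domain $D$, agrees with $I_o$ on $\Sigma_o$, and is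 normal: for every $f\in\Sigma_s$, $f^J(\bar d,d)=\delta$ whenever $d\notin\mathcal A$, and for every relation $R\in\Sigma_s$, $(\bar d,d)\notin R^J$ whenever $d\notin\mathcal A$. AEL formulas over $\Sigma'$ are built like dAEL formulas but with a single unindexed modal operator $K$; an AEL belief pair is a pair $(P,S)$ of sets of $\Sigma'$-structures; the three-valued AEL value is defined like the dAEL one except that $(K\varphi)^{(P,S),J,a}$ is $\mathbf t$ if $\varphi$ has value $\mathbf t$ at all $J'\in P$, $\mathbf f$ if it has value $\mathbf f$ at some $J'\in S$, and $\mathbf u$ otherwise. For an AEL theory $T$, $D^*_T(P,S)=(\{J:T^{(P,S),J}\ne\mathbf f\},\{J:T^{(P,S),J}=\mathbf t\})$. For a $\Sigma$-term $t$ and $\Sigma'$-term $s$, $t_s$ is defined by $x_s=x$ for variables, $f(t_1,\dots,t_n)_s=f((t_1)_s,\dots,(t_n)_s,s)$ for $f\in\Sigma_s$, $f(t_1,\dots,t_n)_s=f((t_1)_s,\dots,(t_n)_s)$ for $f\in\Sigma_o$. $\tau_{\mathit{formula}}(s,\cdot)$: $P(t_1,\dots,t_n)\mapsto P((t_1)_s,\dots,(t_n)_s,s)$ if $P\in\Sigma_s$, $P((t_1)_s,\dots,(t_n)_s)$ if $P\in\Sigma_o$ or equality; commutes with $\neg,\wedge,\forall x$; $\tau_{\mathit{formula}}(s,K_t\phi)=\exists x(x=t_s\wedge\mathrm{Apred}(x)\wedge K\,\tau_{\mathit{formula}}(x,\phi))$ for a fresh variable $x$. $\tau_{\mathit{theory}}(\mathcal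 T)=\bigcup_{A\in\mathcal A}\{\tau_{\mathit{formula}}(A,\phi):\phi\in\mathcal T_A\}$. For a family $(I_A)_{A\in\mathcal A}$ of structures, $\tau_{\mathit{structure}}((I_A)_A)$ is the $\Sigma'$-structure interpreting $\Sigma_o$ as $I_o$, each $f\in\Sigma_s$ by $f(\bar d,d)=f^{I_d}(\bar d)$ if $d\in\mathcal A$ and $\delta$ otherwise, and each relation $R\in\Sigma_s$ by $(\bar d,d)\in R$ iff $d\in\mathcal A$ and $\bar d\in R^{I_d}$. $\tau_{\mathit{pws}}(\mathcal Q)=\{\tau_{\mathit{structure}}((I_A)_A): I_A\in\mathcal Q_A\text{ for all }A\in\mathcal A\}$, and $\tau_{\mathit{beliefpair}}(\mathcal B)=(\tau_{\mathit{pws}}(\mathcal B^c),\tau_{\mathit{pws}}(\mathcal B^l))$. *)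

From Stdlib Require Import Arith List Classical ClassicalEpsilon.
Set Warnings "-warn-library-file-stdlib-vector".
From Stdlib Require Vector.
Import Vector.VectorNotations.

(* Symbols: function symbols [Fs] (constants = arity 0) and relation symbols
   [Rs]; each with an arity and a flag "subjective" (true: in Sigma_s,
   false: in Sigma_o).  Equality is a built-in logical symbol. *)
Record Setup := {
  D : Type;
  Fs : Type;
  Rs : Type;
  far : Fs -> nat;
  rar : Rs -> nat;
  fsubj : Fs -> bool;
  rsubj : Rs -> bool;
  (* the fixed Sigma_o-structure I_o (its values on subjective symbols are
     irrelevant and never used) *)
  Iof : forall f : Fs, Vector.t D (far f) -> D;
  Ior : forall r : Rs, Vector.t D (rar r) -> Prop;
  agent : D -> Prop;
  acon : D -> Fs;
  acon_obj : forall A, agent A -> fsubj (acon A) = false;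
  acon_ar : forall A, agent A -> far (acon A) = 0;
  acon_int : forall A, agent A -> forall v, Iof (acon A) v = A;
  Apred : Rs;
  Apred_obj : rsubj Apred = false;
  Apred_ar : rar Apred = 1;
  Apred_int : forall d : D, Ior Apred (Vector.const d (rar Apred)) <-> agent d;
  delta : D
}.

Set Implicit Arguments.

Section DAEL.
Variable Σ : Setup.

Local Notation D := (D Σ).
Local Notation Fs := (Fs Σ).
Local Notation Rs := (Rs Σ).
Local Notation far := (far Σ).
Local Notation rar := (rar Σ).
Local Notation fsubj := (fsubj Σ).
Local Notation rsubj := (rsubj Σ).
Local Notation agent := (agent Σ).
Local Notation delta := (delta Σ).

Definition EM (P : Prop) : {P} + {~ P} := excluded_middle_informative P.

Definition far' (f : Fs) : nat := if fsubj f then S (far f) else far f.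
Definition rar' (r : Rs) : nat := if rsubj r then S (rar r) else rar r.

Inductive term (fa : Fs -> nat) : Type :=
| Var : nat -> term fa
| App : forall f : Fs, Vector.t (term fa) (fa f) -> term fa.
Arguments Var {fa}.
Arguments App {fa}.

Record Str (fa : Fs -> nat) (ra : Rs -> nat) := {
  fint : forall f : Fs, Vector.t D (fa f) -> D;
  rint : forall r : Rs, Vector.t D (ra r) -> Prop
}.
Arguments fint {fa ra}.
Arguments rint {fa ra}.

Definition SStr := Str far rar.
Definition SStr' := Str far' rar'.

Definition is_structure (I : SStr) : Prop :=
  (forall f, fsubj f = false -> forall v, fint I f v = Iof Σ f v) /\
  (forall r, rsubj r = false -> forall v, rint I r v <-> Ior Σ r v).

(* Sigma'-structure: agrees with I_o on Sigma_o and is normal *)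
Definition fcond' (f : Fs) : (Vector.t D (far' f) -> D) -> Prop :=
  match fsubj f as b
        return (Vector.t D (if b then S (far f) else far f) -> D) -> Prop with
  | true => fun g => forall v, ~ agent (Vector.last v) -> g v = delta
  | false => fun g => forall v, g v = Iof Σ f v
  end.
Definition rcond' (r : Rs) : (Vector.t D (rar' r) -> Prop) -> Prop :=
  match rsubj r as b
        return (Vector.t D (if b then S (rar r) else rar r) -> Prop) -> Prop with
  | true => fun g => forall v, ~ agent (Vector.last v) -> ~ g v
  | false => fun g => forall v, g v <-> Ior Σ r v
  end.
Definition is_structure' (J : SStr') : Prop :=
  (forall f, fcond' f (fint J f)) /\ (forall r, rcond' r (rint J r)).

Fixpoint teval {fa ra} (I : Str fa ra) (a : nat -> D) (t : term fa) : D :=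
  match t with
  | Var x => a x
  | App f v => fint I f (Vector.map (teval I a) v)
  end.

Definition upd (a : nat -> D) (x : nat) (d : D) : nat -> D :=
  fun y => if Nat.eqb y x then d else a y.

Inductive tv := tt_ | ff_ | uu_.
Definition tinv (v : tv) : tv :=
  match v with tt_ => ff_ | ff_ => tt_ | uu_ => uu_ end.
Definition tglb {X : Type} (P : X -> Prop) (g : X -> tv) : tv :=
  if EM (forall x, P x -> g x = tt_) then tt_
  else if EM (exists x, P x /\ g x = ff_) then ff_ else uu_.
Definition tmin (v w : tv) : tv := tglb (fun _ : bool => True) (fun b => if b then v else w).
Definition tbool (P : Prop) : tv := if EM P then tt_ else ff_.

Inductive dform : Type :=
| dRel : forall r : Rs, Vector.t (term far) (rar r) -> dform
| dEq : term far -> term far -> dform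
| dNeg : dform -> dform
| dAnd : dform -> dform -> dform
| dAll : nat -> dform -> dform
| dK : term far -> dform -> dform.

Inductive aform : Type :=
| aRel : forall r : Rs, Vector.t (term far') (rar' r) -> aform
| aEq : term far' -> term far' -> aform
| aNeg : aform -> aform
| aAnd : aform -> aform -> aform
| aAll : nat -> aform -> aform
| aK : aform -> aform.

Definition aEx (x : nat) (p : aform) : aform := aNeg (aAll x (aNeg p)).

Fixpoint tfree {fa} (x : nat) (t : term fa) : Prop :=
  match t with
  | Var y => x = y
  | App f v => Vector.fold_right (fun u P => tfree x u \/ P) v False
  end.
Fixpoint dfree (x : nat) (p : dform) : Prop :=
  match p with
  | dRel r v => Vector.fold_right (fun u P => tfree x u \/ P) v False
  | dEq t1 t2 => tfree x t1 \/ tfree x t2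
  | dNeg q => dfree x q
  | dAnd q1 q2 => dfree x q1 \/ dfree x q2
  | dAll y q => x <> y /\ dfree x q
  | dK t q => tfree x t \/ dfree x q
  end.
Definition dsentence (p : dform) : Prop := forall x, ~ dfree x p.

Definition PWS := SStr -> Prop.
Definition DPWS := D -> PWS.           (* only the values at agents matter *)
Definition DBP := (DPWS * DPWS)%type.  (* (B^c, B^l) *)

Definition DBP_consistent (B : DBP) : Prop :=
  forall A, agent A -> forall I, snd B A I -> fst B A I.
Definition DBP_structures (B : DBP) : Prop :=
  forall A, agent A -> forall I, (fst B A I \/ snd B A I) -> is_structure I.
Definition DBP_univ_consistent (B : DBP) : Prop :=
  forall A, agent A -> exists I, snd B A I.

Fixpoint dval (B : DBP) (p : dform) (I : SStr) (a : nat -> D) : tv :=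
  match p with
  | dRel r v => tbool (rint I r (Vector.map (teval I a) v))
  | dEq t1 t2 => tbool (teval I a t1 = teval I a t2)
  | dNeg q => tinv (dval B q I a)
  | dAnd q1 q2 => tmin (dval B q1 I a) (dval B q2 I a)
  | dAll x q => tglb (fun _ : D => True) (fun d => dval B q I (upd a x d))
  | dK t q =>
      let d := teval I a t in
      if EM (agent d /\ forall J, fst B d J -> dval B q J a = tt_) then tt_
      else if EM (~ agent d \/ exists J, snd B d J /\ dval B q J a = ff_) then ff_
      else uu_
  end.

(* value of a sentence: the assignment is irrelevant; we use the constant one *)
Definition a0 : nat -> D := fun _ => delta.

Definition dtheory := D -> dform -> Prop.  (* T_A, only agents matter *)
Definition dtheory_sentences (T : dtheory) : Prop :=
  forall A, agent A -> forall p, T A p -> dsentence p.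

Definition dset_val (B : DBP) (TA : dform -> Prop) (I : SStr) : tv :=
  tglb TA (fun p => dval B p I a0).

Definition Dstar (T : dtheory) (B : DBP) : DBP :=
  (fun A I => is_structure I /\ dset_val B (T A) I <> ff_,
   fun A I => is_structure I /\ dset_val B (T A) I = tt_).

Definition ABP := ((SStr' -> Prop) * (SStr' -> Prop))%type.

Fixpoint aval (PS : ABP) (p : aform) (J : SStr') (a : nat -> D) : tv :=
  match p with
  | aRel r v => tbool (rint J r (Vector.map (teval J a) v))
  | aEq t1 t2 => tbool (teval J a t1 = teval J a t2)
  | aNeg q => tinv (aval PS q J a)
  | aAnd q1 q2 => tmin (aval PS q1 J a) (aval PS q2 J a)
  | aAll x q => tglb (fun _ : D => True) (fun d => aval PS q J (upd a x d))
  | aK q =>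
      if EM (forall J', fst PS J' -> aval PS q J' a = tt_) then tt_
      else if EM (exists J', snd PS J' /\ aval PS q J' a = ff_) then ff_
      else uu_
  end.

Definition aset_val (PS : ABP) (T : aform -> Prop) (J : SStr') : tv :=
  tglb T (fun p => aval PS p J a0).

Definition Dstar' (T : aform -> Prop) (PS : ABP) : ABP :=
  (fun J => is_structure' J /\ aset_val PS T J <> ff_,
   fun J => is_structure' J /\ aset_val PS T J = tt_).

Definition fadj {X : Type} (f : Fs) (s : X) : Vector.t X (far f) -> Vector.t X (far' f) :=
  match fsubj f as b return Vector.t X (far f) -> Vector.t X (if b then S (far f) else far f) with
  | true => fun w => Vector.shiftin s w
  | false => fun w => w
  end.
Definition radj {X : Type} (r : Rs) (s : X) : Vector.t X (rar r) -> Vector.t X (rar' r) :=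
  match rsubj r as b return Vector.t X (rar r) -> Vector.t X (if b then S (rar r) else rar r) with
  | true => fun w => Vector.shiftin s w
  | false => fun w => w
  end.

Fixpoint tr (s : term far') (t : term far) : term far' :=
  match t with
  | Var x => Var x
  | App f v => App f (fadj f s (Vector.map (tr s) v))
  end.

(* variable bounds, for choosing fresh variables *)
Fixpoint tmaxv {fa} (t : term fa) : nat :=
  match t with
  | Var x => x
  | App f v => Vector.fold_right (fun u m => Nat.max (tmaxv u) m) v 0
  end.
Fixpoint dmaxv (p : dform) : nat :=
  match p with
  | dRel r v => Vector.fold_right (fun u m => Nat.max (tmaxv u) m) v 0
  | dEq t1 t2 => Nat.max (tmaxv t1) (tmaxv t2)
  | dNeg q => dmaxv q
  | dAnd q1 q2 => Nat.max (dmaxv q1) (dmaxv q2)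
  | dAll y q => Nat.max y (dmaxv q)
  | dK t q => Nat.max (tmaxv t) (dmaxv q)
  end.

(* tau_formula(s, .) ; the fresh variable for K_t q is larger than every
   variable occurring in s, t and q *)
Fixpoint tau_formula (s : term far') (p : dform) : aform :=
  match p with
  | dRel r v => aRel r (radj r s (Vector.map (tr s) v))
  | dEq t1 t2 => aEq (tr s t1) (tr s t2)
  | dNeg q => aNeg (tau_formula s q)
  | dAnd q1 q2 => aAnd (tau_formula s q1) (tau_formula s q2)
  | dAll x q => aAll x (tau_formula s q)
  | dK t q =>
      let x := S (Nat.max (tmaxv s) (Nat.max (tmaxv t) (dmaxv q))) in
      aEx x (aAnd (aEq (Var x) (tr s t))
                  (aAnd (aRel (Apred Σ) (Vector.const (Var x) (rar' (Apred Σ))))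
                        (aK (tau_formula (Var x) q))))
  end.

(* the constant symbol A as a Sigma'-term (acon A has arity 0, so the
   argument vector is empty) *)
Definition aconst (A : D) : term far' :=
  App (acon Σ A) (Vector.const (Var 0) (far' (acon Σ A))).

Definition tau_theory (T : dtheory) : aform -> Prop :=
  fun q => exists A, agent A /\ exists p, T A p /\ q = tau_formula (aconst A) p.

Definition tau_structure (fam : D -> SStr) : SStr' :=
  {| fint := fun f =>
       match fsubj f as b
             return Vector.t D (if b then S (far f) else far f) -> D with
       | true => fun v =>
           let d := Vector.last v in
           if EM (agent d) then fint (fam d) f (Vector.shiftout v) else delta
       | false => fun v => Iof Σ f v
       end;
     rint := fun r =>
       match rsubj r as b
             return Vector.t D (if b then S (rar r) else rar r) -> Prop with
       | true => fun v =>
           let d := Vector.last v in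
           agent d /\ rint (fam d) r (Vector.shiftout v)
       | false => fun v => Ior Σ r v
       end |}.

Definition tau_pws (Q : DPWS) : SStr' -> Prop :=
  fun J => exists fam : D -> SStr,
      (forall A, agent A -> Q A (fam A)) /\ J = tau_structure fam.

Definition tau_beliefpair (B : DBP) : ABP :=
  (tau_pws (fst B), tau_pws (snd B)).

Definition ABP_eq (P1 P2 : ABP) : Prop :=
  (forall J, fst P1 J <-> fst P2 J) /\ (forall J, snd P1 J <-> snd P2 J).

End DAEL.

(* The translation turns a family (I_A)_A of Sigma-structures, one per agent,
   into the single Sigma'-structure tau(I) that stores I_A in the extra
   "agent" argument of every subjective symbol.  Every normal
   Sigma'-structure J arises this way, from the family [fam_of J] of its
   slices, so a PWS tau_pws(Q) is exactly the set of normal J whose slices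
   lie in Q.
   The heart of the proof is the translation lemma [aval_tau_formula]: if the
   index term s denotes an agent A, then tau_formula(s, phi) has the same
   value in tau(I) as phi has in I_A.  It is proved by induction on phi; in
   the modal case, quantifying over the structures of tau_pws(Q) amounts to
   quantifying over the A-slices Q_A, because every element of Q_A can be
   completed to a family through Q (here universal consistency is used).
   Summing the translation lemma over the theories T_A gives the values of
   tau_theory(T), from which the main theorem follows slice by slice. *)

From Stdlib Require Import Arith Lia Classical ClassicalEpsilon
  FunctionalExtensionality PropExtensionality Setoid.
Set Warnings "-warn-library-file-stdlib-vector".
From Stdlib Require Vector.
Set Implicit Arguments.

Lemma tv_eq (x y : tv) : (x = tt_ <-> y = tt_) -> (x = ff_ <-> y = ff_) -> x = y.
Proof.
  destruct x, y; intros [H1 H2] [H3 H4]; try reflexivity;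
    solve [discriminate (H1 eq_refl) | discriminate (H2 eq_refl)
          | discriminate (H3 eq_refl) | discriminate (H4 eq_refl)].
Qed.

Lemma tglb_tt X (P : X -> Prop) g : tglb P g = tt_ <-> forall x, P x -> g x = tt_.
Proof.
  unfold tglb. destruct (EM _); [tauto|].
  destruct (EM _); split; intro; try discriminate; tauto.
Qed.

Lemma tglb_ff X (P : X -> Prop) g : tglb P g = ff_ <-> exists x, P x /\ g x = ff_.
Proof.
  unfold tglb. destruct (EM _) as [Hall|Hall].
  - split; [discriminate|]. intros [x [Px Hx]]. rewrite (Hall x Px) in Hx. discriminate.
  - destruct (EM _); split; intro; try discriminate; tauto.
Qed.

Lemma tglb_ext X (P : X -> Prop) g h : (forall x, g x = h x) -> tglb P g = tglb P h.
Proof. intro H. replace h with g; [reflexivity|]. now apply functional_extensionality. Qed.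

Lemma tmin_tt v w : tmin v w = tt_ <-> v = tt_ /\ w = tt_.
Proof.
  unfold tmin. rewrite tglb_tt. split.
  - intro H. exact (conj (H true I) (H false I)).
  - intros [Hv Hw] [|] _; assumption.
Qed.

Lemma tmin_ff v w : tmin v w = ff_ <-> v = ff_ \/ w = ff_.
Proof.
  unfold tmin. rewrite tglb_ff. split.
  - intros [[|] [_ H]]; auto.
  - intros [H|H]; [exists true | exists false]; auto.
Qed.

Lemma tinv_tt v : tinv v = tt_ <-> v = ff_.
Proof. destruct v; simpl; split; congruence. Qed.

Lemma tinv_ff v : tinv v = ff_ <-> v = tt_.
Proof. destruct v; simpl; split; congruence. Qed.

Lemma tbool_tt P : tbool P = tt_ <-> P.
Proof. unfold tbool; destruct (EM P); split; intro; try discriminate; tauto. Qed.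

Lemma tbool_ff P : tbool P = ff_ <-> ~ P.
Proof. unfold tbool; destruct (EM P); split; intro; try discriminate; tauto. Qed.

Lemma tbool_iff P Q : (P <-> Q) -> tbool P = tbool Q.
Proof. intro H. unfold tbool. destruct (EM P), (EM Q); tauto. Qed.

(* The shape of the value of a modal formula: t if P1, else f if P2, else u. *)
Lemma if3_ff (P1 P2 : Prop) :
  (if EM P1 then tt_ else if EM P2 then ff_ else uu_) = ff_ <-> ~ P1 /\ P2.
Proof.
  destruct (EM P1); [split; [discriminate | tauto]|].
  destruct (EM P2); split; intro; try discriminate; tauto.
Qed.

Lemma if3_ext (P1 P2 Q1 Q2 : Prop) : (P1 <-> Q1) -> (P2 <-> Q2) ->
  (if EM P1 then tt_ else if EM P2 then ff_ else uu_)
  = (if EM Q1 then tt_ else if EM Q2 then ff_ else uu_).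
Proof. intros. destruct (EM P1), (EM Q1); try tauto; destruct (EM P2), (EM Q2); tauto. Qed.

(* Vectors: [vall P v] says that every entry of v satisfies P; it is the
   induction hypothesis for the nested vectors of arguments in a term. *)

Fixpoint vall {A n} (P : A -> Prop) (v : Vector.t A n) : Prop :=
  match v with
  | Vector.nil _ => True
  | Vector.cons _ x _ w => P x /\ vall P w
  end.

Lemma shiftout_shiftin {A n} (a : A) (v : Vector.t A n) :
  Vector.shiftout (Vector.shiftin a v) = v.
Proof. induction v; simpl; f_equal; auto. Qed.

Lemma shiftin_shiftout {A n} (v : Vector.t A (S n)) :
  Vector.shiftin (Vector.last v) (Vector.shiftout v) = v.
Proof.
  induction n; apply (Vector.caseS' v); intros h w.
  - now rewrite (Vector.nil_spec w).
  - simpl. f_equal. apply IHn.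
Qed.

Lemma map_const {A B} (f : A -> B) a n :
  Vector.map f (Vector.const a n) = Vector.const (f a) n.
Proof. induction n; simpl; f_equal; auto. Qed.

Lemma vec0_eq {A n} (H : n = 0) (v w : Vector.t A n) : v = w.
Proof. subst. now rewrite (Vector.nil_spec v), (Vector.nil_spec w). Qed.

Section Translation.
Variable Σ : Setup.

Local Notation D := (D Σ).
Local Notation agent := (agent Σ).
Local Notation tau := (@tau_structure Σ).

Lemma term_ind' (fa : Fs Σ -> nat) (P : term Σ fa -> Prop) :
  (forall x, P (Var Σ fa x)) -> (forall f v, vall P v -> P (App f v)) ->
  forall t, P t.
Proof.
  intros HV HA. fix IH 1. intros [x|f v]; [apply HV | apply HA].
  revert v. generalize (fa f). fix IHv 2. intros n [|u m w].
  - exact I.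
  - exact (conj (IH u) (IHv m w)).
Qed.

Lemma map_fadj {X Y} (g : X -> Y) f s w :
  Vector.map g (fadj Σ f s w) = fadj Σ f (g s) (Vector.map g w).
Proof. unfold fadj, far'. destruct (fsubj Σ f); [apply Vector.map_shiftin | reflexivity]. Qed.

Lemma map_radj {X Y} (g : X -> Y) r s w :
  Vector.map g (radj Σ r s w) = radj Σ r (g s) (Vector.map g w).
Proof. unfold radj, rar'. destruct (rsubj Σ r); [apply Vector.map_shiftin | reflexivity]. Qed.

(* In tau(fam), a symbol applied with extra argument e is the symbol of the
   slice fam e (for objective symbols because fam e agrees with I_o). *)
Lemma fint_tau (fam : D -> SStr Σ) f e w : agent e -> is_structure (fam e) ->
  fint (tau fam) f (fadj Σ f e w) = fint (fam e) f w.
Proof.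
  intros He [Hf _]. unfold tau_structure, fadj; simpl; unfold far' in *.
  destruct (fsubj Σ f) eqn:E.
  - rewrite Vector.shiftin_last, shiftout_shiftin. destruct (EM _); tauto.
  - symmetry. now apply Hf.
Qed.

Lemma rint_tau (fam : D -> SStr Σ) r e w : agent e -> is_structure (fam e) ->
  (rint (tau fam) r (radj Σ r e w) <-> rint (fam e) r w).
Proof.
  intros He [_ Hr]. unfold tau_structure, radj; simpl; unfold rar' in *.
  destruct (rsubj Σ r) eqn:E.
  - rewrite Vector.shiftin_last, shiftout_shiftin. tauto.
  - symmetry. now apply Hr.
Qed.

Lemma apred_tau (fam : D -> SStr Σ) e :
  rint (tau fam) (Apred Σ) (Vector.const e (rar' Σ (Apred Σ))) <-> agent e.
Proof.
  unfold tau_structure; simpl. unfold rar'.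
  generalize (Apred_int Σ e). rewrite (Apred_obj Σ). simpl. auto.
Qed.

Lemma tau_aconst (fam : D -> SStr Σ) a A : agent A -> teval (tau fam) a (aconst Σ A) = A.
Proof.
  intro HA. unfold aconst. simpl.
  generalize (Vector.map (teval (tau fam) a) (Vector.const (Var Σ (far' Σ) 0) (far' Σ (acon Σ A)))).
  unfold tau_structure; simpl. unfold far'.
  generalize (acon_int Σ A HA). rewrite (acon_obj Σ A HA). simpl. auto.
Qed.

Lemma teval_tr (fam : D -> SStr Σ) (s : term Σ (far' Σ)) a :
  agent (teval (tau fam) a s) -> is_structure (fam (teval (tau fam) a s)) ->
  forall t, teval (tau fam) a (tr s t) = teval (fam (teval (tau fam) a s)) a t.
Proof.
  intros He Hs. apply term_ind'; [reflexivity|].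
  intros f v Hv. cbn -[tau_structure]. rewrite map_fadj, fint_tau by assumption. f_equal.
  rewrite Vector.map_map. clear -Hv. induction v; simpl in *; f_equal; tauto.
Qed.

Lemma teval_upd {fa ra} (I : Str Σ fa ra) t a x e :
  tmaxv t < x -> teval I (upd Σ a x e) t = teval I a t.
Proof.
  revert a. pattern t. apply term_ind'; clear t; [intros y | intros f v Hv]; intros a Hx; simpl in *.
  - unfold upd. destruct (Nat.eqb_spec y x); [lia | reflexivity].
  - f_equal. induction v as [|u n v IHv]; simpl in *; [reflexivity|].
    destruct Hv as [Hu Hv]. f_equal; [apply Hu | apply IHv]; auto; lia.
Qed.

Lemma aconst_upd {ra} (J : Str Σ (far' Σ) ra) a y e A : agent A ->
  teval J (upd Σ a y e) (aconst Σ A) = teval J a (aconst Σ A).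
Proof.
  intro HA. unfold aconst; simpl. f_equal. apply vec0_eq.
  unfold far'. rewrite (acon_obj Σ A HA). apply (acon_ar Σ A HA).
Qed.

Lemma upd_eq (a : nat -> D) x e : upd Σ a x e x = e.
Proof. unfold upd. now rewrite Nat.eqb_refl. Qed.

Lemma upd_comm (a : nat -> D) x y e e' : x <> y ->
  upd Σ (upd Σ a x e) y e' = upd Σ (upd Σ a y e') x e.
Proof.
  intro H. apply functional_extensionality. intro z. unfold upd.
  destruct (Nat.eqb_spec z y), (Nat.eqb_spec z x); congruence.
Qed.

Lemma dval_upd (B : DBP Σ) p I a x e :
  dmaxv p < x -> dval B p I (upd Σ a x e) = dval B p I a.
Proof.
  revert I a. induction p; intros I a H; simpl in *.
  - apply tbool_iff.
    replace (Vector.map (teval I (upd Σ a x e)) t) with (Vector.map (teval I a) t); [tauto|].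
    clear -H. induction t; simpl in *; [reflexivity|].
    f_equal; [symmetry; apply teval_upd | apply IHt]; lia.
  - now rewrite !teval_upd by lia.
  - now rewrite IHp.
  - now rewrite IHp1, IHp2 by lia.
  - apply tglb_ext. intro d. rewrite upd_comm by lia. apply IHp. lia.
  - rewrite teval_upd by lia.
    assert (Hp : forall J, dval B p J (upd Σ a x e) = dval B p J a) by (intro; apply IHp; lia).
    apply if3_ext; setoid_rewrite Hp; tauto.
Qed.

Definition structured (fam : D -> SStr Σ) : Prop := forall A, agent A -> is_structure (fam A).

(* Every normal Sigma'-structure is tau of the family of its slices. *)
Definition fam_of (J : SStr' Σ) (d : D) : SStr Σ :=
  {| fint := fun f w =>
       (match fsubj Σ f as b
              return (Vector.t D (if b then S (far Σ f) else far Σ f) -> D) -> D with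
        | true => fun g => g (Vector.shiftin d w)
        | false => fun _ => Iof Σ f w
        end) (fint J f);
     rint := fun r w =>
       (match rsubj Σ r as b
              return (Vector.t D (if b then S (rar Σ r) else rar Σ r) -> Prop) -> Prop with
        | true => fun g => g (Vector.shiftin d w)
        | false => fun _ => Ior Σ r w
        end) (rint J r) |}.

Lemma fam_of_structure J d : is_structure (fam_of J d).
Proof.
  split.
  - intros f Hf v. simpl. generalize (fint J f). unfold far'. now rewrite Hf.
  - intros r Hr v. simpl. generalize (rint J r). unfold rar'. rewrite Hr. tauto.
Qed.

Lemma tau_normal (fam : D -> SStr Σ) : is_structure' (tau fam).
Proof.
  split.
  - intro f. unfold fcond', tau_structure; simpl. unfold far'.
    destruct (fsubj Σ f); [|reflexivity]. intros v Hn. destruct (EM _); tauto.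
  - intro r. unfold rcond', tau_structure; simpl. unfold rar'.
    destruct (rsubj Σ r); [|tauto]. intros v Hn [H _]; tauto.
Qed.

Lemma tau_fam_of J : is_structure' J -> J = tau (fam_of J).
Proof.
  destruct J as [fJ rJ]. intros [Hf Hr]. unfold tau_structure. f_equal.
  - apply functional_extensionality_dep. intro f. specialize (Hf f). simpl in *.
    revert Hf. generalize (fJ f). unfold fcond', far'.
    destruct (fsubj Σ f); intros g H; apply functional_extensionality; intro v; [|apply H].
    destruct (EM (agent (Vector.last v))); [now rewrite shiftin_shiftout | now apply H].
  - apply functional_extensionality_dep. intro r. specialize (Hr r). simpl in *.
    revert Hr. generalize (rJ r). unfold rcond', rar'.
    destruct (rsubj Σ r); intros g H; apply functional_extensionality; intro v;
      apply propositional_extensionality; [|apply H].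
    rewrite shiftin_shiftout. split; [|tauto].
    intro Hg. split; [|exact Hg]. apply NNPP. intro Hn. exact (H v Hn Hg).
Qed.

Lemma fam_of_tau (fam : D -> SStr Σ) A : agent A -> is_structure (fam A) ->
  fam_of (tau fam) A = fam A.
Proof.
  intros HA [Hf Hr].
  transitivity {| fint := fint (fam A); rint := rint (fam A) |}; [|now destruct (fam A)].
  unfold fam_of. f_equal.
  - apply functional_extensionality_dep. intro f. apply functional_extensionality. intro w.
    simpl. specialize (Hf f). unfold far' in *. destruct (fsubj Σ f).
    + rewrite Vector.shiftin_last, shiftout_shiftin. destruct (EM _); tauto.
    + symmetry. now apply Hf.
  - apply functional_extensionality_dep. intro r. apply functional_extensionality. intro w.
    apply propositional_extensionality.
    simpl. specialize (Hr r). unfold rar' in *. destruct (rsubj Σ r).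
    + rewrite Vector.shiftin_last, shiftout_shiftin. tauto.
    + symmetry. now apply Hr.
Qed.

Lemma tau_pws_iff (Q : DPWS Σ) :
  (forall A, agent A -> forall I, Q A I -> is_structure I) ->
  forall J, tau_pws Q J <-> is_structure' J /\ forall A, agent A -> Q A (fam_of J A).
Proof.
  intros HQ J. split.
  - intros [fam [Hfam ->]]. split; [apply tau_normal|].
    intros A HA. rewrite fam_of_tau; auto. eapply HQ; eauto.
  - intros [HJ Hslices]. exists (fam_of J). split; [exact Hslices | now apply tau_fam_of].
Qed.

Lemma family_through (Q : DPWS Σ) e I :
  (forall A, agent A -> exists I', Q A I') -> Q e I ->
  exists fam, (forall A, agent A -> Q A (fam A)) /\ fam e = I.
Proof.
  intros Hne HI.
  assert (Hpick : forall A, exists I', agent A -> Q A I').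
  { intro A. destruct (classic (agent A)) as [HA|HA].
    - destruct (Hne A HA) as [I' H]. now exists I'.
    - exists I. tauto. }
  set (pick A := proj1_sig (constructive_indefinite_description _ (Hpick A))).
  exists (fun A => if EM (A = e) then I else pick A). split.
  - intros A HA. destruct (EM (A = e)) as [->|_]; [exact HI|].
    exact (proj2_sig (constructive_indefinite_description _ (Hpick A)) HA).
  - now destruct (EM (e = e)).
Qed.

(* Quantifying over tau_pws(Q) a property that only depends on the e-slice
   is quantifying over Q e. *)
Section Slices.
Variable Q : DPWS Σ.
Hypothesis Q_structures : forall A, agent A -> forall I, Q A I -> is_structure I.
Hypothesis Q_nonempty : forall A, agent A -> exists I, Q A I.
Variables (e : D) (g : SStr' Σ -> tv) (h : SStr Σ -> tv) (P : tv -> Prop).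
Hypothesis e_agent : agent e.
Hypothesis g_slice : forall fam, structured fam -> g (tau fam) = h (fam e).

Lemma through_structured fam : (forall A, agent A -> Q A (fam A)) -> structured fam.
Proof. intros Hfam A HA. exact (Q_structures HA (Hfam A HA)). Qed.

Lemma tau_pws_forall :
  (forall J, tau_pws Q J -> P (g J)) <-> (forall I, Q e I -> P (h I)).
Proof.
  split.
  - intros H I HI. destruct (@family_through Q e I Q_nonempty HI) as [fam [Hfam <-]].
    rewrite <- g_slice by now apply through_structured. apply H. now exists fam.
  - intros H J [fam [Hfam ->]]. rewrite g_slice by now apply through_structured. apply H, Hfam, e_agent.
Qed.

Lemma tau_pws_exists :
  (exists J, tau_pws Q J /\ P (g J)) <-> (exists I, Q e I /\ P (h I)).
Proof.
  split.
  - intros [J [[fam [Hfam ->]] HP]]. rewrite g_slice in HP by now apply through_structured.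
    exists (fam e). auto.
  - intros [I [HI HP]]. destruct (@family_through Q e I Q_nonempty HI) as [fam [Hfam <-]].
    exists (tau fam). split; [now exists fam|]. rewrite g_slice by now apply through_structured. exact HP.
Qed.
End Slices.

(* The guard of a translated modal atom:  exists x (x = u /\ Apred(x) /\ q).
   If u denotes v independently of x, it is q at x := v when v is an agent,
   and f otherwise. *)
Definition agent_guard (x : nat) (u : term Σ (far' Σ)) (q : aform Σ) : aform Σ :=
  aEx x (aAnd (aEq (Var Σ _ x) u)
                (aAnd (aRel (Apred Σ) (Vector.const (Var Σ _ x) (rar' Σ (Apred Σ)))) q)).

Lemma agent_guard_value (PS : ABP Σ) (fam : D -> SStr Σ) a x u q v :
  (forall e, teval (tau fam) (upd Σ a x e) u = v) ->
  aval PS (agent_guard x u q) (tau fam) a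
  = if EM (agent v) then aval PS q (tau fam) (upd Σ a x v) else ff_.
Proof.
  intro Hu.
  assert (Hconj : forall e,
    aval PS (aAnd (aEq (Var Σ _ x) u)
                  (aAnd (aRel (Apred Σ) (Vector.const (Var Σ _ x) (rar' Σ (Apred Σ)))) q))
         (tau fam) (upd Σ a x e)
    = tmin (tbool (e = v)) (tmin (tbool (agent e)) (aval PS q (tau fam) (upd Σ a x e)))).
  { intro e. cbn [aval]. rewrite map_const. cbn [teval]. rewrite upd_eq, Hu.
    f_equal. f_equal. apply tbool_iff, apred_tau. }
  unfold agent_guard, aEx. cbn [aval]. rewrite (tglb_ext _ _ _ (fun e => f_equal tinv (Hconj e))).
  apply tv_eq.
  - rewrite tinv_tt, tglb_ff. split.
    + intros [e [_ He]]. rewrite tinv_ff, !tmin_tt, !tbool_tt in He.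
      destruct He as [-> [Hv Hq]]. now destruct (EM (agent v)).
    + intro H. exists v. split; [exact I|]. rewrite tinv_ff, !tmin_tt, !tbool_tt.
      destruct (EM (agent v)); [tauto | discriminate].
  - rewrite tinv_ff, tglb_tt. split.
    + intro H. specialize (H v I). rewrite tinv_tt, !tmin_ff, !tbool_ff in H.
      destruct (EM (agent v)); [|reflexivity]. tauto.
    + intros H e _. rewrite tinv_tt, !tmin_ff, !tbool_ff.
      destruct (classic (e = v)) as [->|]; [|tauto].
      destruct (EM (agent v)); tauto.
Qed.

Section Beliefs.
Variable B : DBP Σ.
Hypothesis B_structures : DBP_structures B.
Hypothesis B_consistent : DBP_consistent B.
Hypothesis B_univ_consistent : DBP_univ_consistent B.

Lemma aK_value (q : aform Σ) p a' a (I : SStr Σ) t :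
  agent (teval I a t) ->
  (forall fam, structured fam ->
     aval (tau_beliefpair B) q (tau fam) a' = dval B p (fam (teval I a t)) a) ->
  forall J, aval (tau_beliefpair B) (aK q) J a' = dval B (dK t p) I a.
Proof.
  intros He Hq J. cbn [aval dval fst snd tau_beliefpair].
  assert (Hc : forall A, agent A -> exists I', fst B A I').
  { intros A HA. destruct (B_univ_consistent A HA) as [I' HI']. exists I'. now apply B_consistent. }
  assert (Hcs : forall A, agent A -> forall I', fst B A I' -> is_structure I')
    by (intros A HA I' HI'; exact (B_structures A HA I' (or_introl HI'))).
  assert (Hls : forall A, agent A -> forall I', snd B A I' -> is_structure I')
    by (intros A HA I' HI'; exact (B_structures A HA I' (or_intror HI'))).
  pose proof (tau_pws_forall (fst B) Hcs Hc (teval I a t)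
                (fun J => aval (tau_beliefpair B) q J a') (fun I => dval B p I a)
                (fun v => v = tt_) He Hq) as Hforall.
  pose proof (tau_pws_exists (snd B) Hls B_univ_consistent
                (teval I a t) (fun J => aval (tau_beliefpair B) q J a') (fun I => dval B p I a)
                (fun v => v = ff_) He Hq) as Hexists.
  cbn beta in Hforall, Hexists.
  apply if3_ext; tauto.
Qed.

(* The index terms used by the translation: the constant of an agent (at the
   top level) or a variable that is fresh for the formula (under K). *)
Definition admissible_index (p : dform Σ) (s : term Σ (far' Σ)) : Prop :=
  (exists A, agent A /\ s = aconst Σ A) \/ (exists x, s = Var Σ _ x /\ dmaxv p < x).

Lemma admissible_weaken p q s :
  admissible_index p s -> dmaxv q <= dmaxv p -> admissible_index q s.
Proof. intros [H|[x [-> H]]] Hle; [left; exact H | right; exists x; split; [reflexivity | lia]]. Qed.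

Lemma admissible_upd p s (J : SStr' Σ) a y e :
  admissible_index p s -> y <= dmaxv p -> teval J (upd Σ a y e) s = teval J a s.
Proof.
  intros [[A [HA ->]]|[x [-> H]]] Hy.
  - now apply aconst_upd.
  - simpl. unfold upd. destruct (Nat.eqb_spec x y); [lia | reflexivity].
Qed.

Lemma aval_tau_formula p : forall s fam a,
  structured fam -> admissible_index p s -> agent (teval (tau fam) a s) ->
  aval (tau_beliefpair B) (tau_formula s p) (tau fam) a
  = dval B p (fam (teval (tau fam) a s)) a.
Proof.
  induction p as [r v | t1 t2 | p IHp | p1 IHp1 p2 IHp2 | y p IHp | t p IHp];
    intros s fam a Hfam Hs Hag; cbn [tau_formula aval dval].
  - apply tbool_iff. rewrite map_radj, Vector.map_map.
    rewrite (Vector.map_ext _ _ _ _ (fun u => teval_tr fam s a Hag (Hfam _ Hag) u)).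
    apply rint_tau; auto.
  - apply tbool_iff. rewrite !teval_tr; auto. reflexivity.
  - now rewrite IHp.
  - rewrite IHp1, IHp2; auto; eapply admissible_weaken; eauto; simpl; lia.
  - apply tglb_ext. intro e.
    assert (Hsy : teval (tau fam) (upd Σ a y e) s = teval (tau fam) a s)
      by (apply admissible_upd with (p := dAll y p); [exact Hs | simpl; lia]).
    rewrite IHp, Hsy; auto.
    + eapply admissible_weaken; eauto. simpl; lia.
    + now rewrite Hsy.
  - set (x := S (Nat.max (tmaxv s) (Nat.max (tmaxv t) (dmaxv p)))).
    set (d := teval (tau fam) a s). set (v := teval (fam d) a t).
    assert (Hsx : forall e, teval (tau fam) (upd Σ a x e) s = d)
      by (intro; apply teval_upd; lia).
    assert (Hv : forall e, teval (tau fam) (upd Σ a x e) (tr s t) = v).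
    { intro e. rewrite teval_tr; rewrite Hsx; auto. apply teval_upd. lia. }
    change (aval (tau_beliefpair B) (agent_guard x (tr s t) (aK (tau_formula (Var Σ _ x) p)))
              (tau fam) a = dval B (dK t p) (fam d) a).
    erewrite agent_guard_value; [|exact Hv].
    destruct (EM (agent v)) as [Hv_agent|Hv_agent].
    + apply aK_value; [exact Hv_agent|]. intros fam' Hfam'.
      rewrite IHp; simpl; rewrite ?upd_eq; auto.
      * apply dval_upd. lia.
      * right. exists x. split; [reflexivity | lia].
    + cbn [dval]. symmetry. apply if3_ff. fold v. tauto.
Qed.

Variable T : dtheory Σ.

Lemma aval_tau_theory fam A p : structured fam -> agent A ->
  aval (tau_beliefpair B) (tau_formula (aconst Σ A) p) (tau fam) (a0 Σ)
  = dval B p (fam A) (a0 Σ).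
Proof.
  intros Hfam HA. rewrite aval_tau_formula, tau_aconst; auto.
  - left. eauto.
  - now rewrite tau_aconst.
Qed.

Lemma theory_value_tt J : is_structure' J ->
  aset_val (tau_beliefpair B) (tau_theory T) J = tt_
  <-> forall A, agent A -> dset_val B (T A) (fam_of J A) = tt_.
Proof.
  intro HJ. rewrite (tau_fam_of HJ) at 1.
  assert (Hfam : structured (fam_of J)) by (intros A _; apply fam_of_structure).
  unfold aset_val, dset_val, tau_theory. setoid_rewrite tglb_tt. split.
  - intros H A HA p Hp. rewrite <- aval_tau_theory; auto. apply H. eauto.
  - intros H q [A [HA [p [Hp ->]]]]. rewrite aval_tau_theory; auto.
Qed.

Lemma theory_value_ff J : is_structure' J ->
  aset_val (tau_beliefpair B) (tau_theory T) J = ff_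
  <-> exists A, agent A /\ dset_val B (T A) (fam_of J A) = ff_.
Proof.
  intro HJ. rewrite (tau_fam_of HJ) at 1.
  assert (Hfam : structured (fam_of J)) by (intros A _; apply fam_of_structure).
  unfold aset_val, dset_val, tau_theory. setoid_rewrite tglb_ff. split.
  - intros [q [[A [HA [p [Hp ->]]]] H]]. rewrite aval_tau_theory in H; eauto.
  - intros [A [HA [p [Hp H]]]]. exists (tau_formula (aconst Σ A) p).
    rewrite aval_tau_theory; eauto 6.
Qed.

End Beliefs.
End Translation.

(* Both sides consist of the normal J whose slices fam_of J A are, for every
   agent A, models (resp. non-countermodels) of T_A. *)
Theorem mainTheorem11 (Σ : Setup) (T : dtheory Σ) (B : DBP Σ) :
  dtheory_sentences T ->
  DBP_structures B ->
  DBP_consistent B ->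
  DBP_univ_consistent B ->
  ABP_eq (tau_beliefpair (Dstar T B))
         (Dstar' (tau_theory T) (tau_beliefpair B)).
Proof.
  intros _ HBs HBc HBu.
  split; intro J; cbn [tau_beliefpair Dstar Dstar' fst snd];
    rewrite tau_pws_iff by (intros A _ I [HI _]; exact HI);
    split; intros [HJ Hslices]; split; try exact HJ.
  - rewrite theory_value_ff by assumption. intros [A [HA Hff]].
    exact (proj2 (Hslices A HA) Hff).
  - intros A HA. split; [apply fam_of_structure|]. intro Hff.
    apply Hslices. apply theory_value_ff; eauto.
  - apply theory_value_tt; auto. intros A HA. apply Hslices, HA.
  - intros A HA. split; [apply fam_of_structure|]. revert A HA.
    now apply theory_value_tt.
Qed.
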